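(* Fix the uniform prior $P$ on $\{1,\dots,n\}^T$, a nonnegative utility function $u:\mathcal{Z}\times\mathcal{H}\to\mathbb{R}_+$, an amplitude $\lambda\ge0$ and a decay $\gamma\in(0,1)$. If Adaptive Sampling SGD is run for $T$ iterations, its posterior $Q$ satisfies $$D_{KL}(Q\|P)\le\frac{\lambda}{1-\gamma}\sum_{t=1}^{T-1}\mathbb{E}_{(i_1,\dots,i_t)\sim Q}\big[u(z_{i_t},h_t)\big].$$
   Context: Adaptive Sampling SGD: inputs are examples $(z_1,\dots,z_n)\in\mathcal{Z}^n$, an initial hypothesis $h_0\in\mathcal{H}$, update rules $G_t:\mathcal{H}\times\mathcal{Z}\to\mathcal{H}$, utility $u$, amplitude $\lambda$, decay $\gamma$. Initialize weights $w_1=\dots=w_n=1$. For $t=1,\dots,T$: draw $i_t$ with conditional probability $Q(i_t=i\mid i_1,\dots,i_{t-1})=w_i/\sum_{j=1}^nw_j$; set $h_t=G_t(h_{t-1},z_{i_t})$; update $w_{i_t}\leftarrow w_{i_t}^{\gamma}\exp(\lambda u(z_{i_t},h_t))$. Output $h_T$. The posterior $Q$ is the resulting distribution of $(i_1,\dots,i_T)$ on $\{1,\dots,n\}^T$ (so $h_t$ is a function of $(i_1,\dots,i_t)$); $D_{KL}(Q\|P)=\mathbb{E}_{Q}\ln(Q/P)$. *)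

From Stdlib Require Import Reals List.
Import ListNotations.
Open Scope R_scope.

(* Indices of examples are 0..n-1 (the paper's 1..n, shifted).
   Iterations are numbered t = 1..T as in the paper. *)

Fixpoint rsum (n : nat) (f : nat -> R) : R :=
  match n with O => 0 | S m => rsum m f + f m end.

(* state of the algorithm: weights (w_j)_j and current hypothesis *)
Definition state (H : Type) : Type := ((nat -> R) * H)%type.

Definition step {Z H : Type} (G : nat -> H -> Z -> H) (z : nat -> Z)
  (u : Z -> H -> R) (lam gam : R) (t : nat) (st : state H) (i : nat) : state H :=
  let h := G t (snd st) (z i) in
  let w := fst st in
  ((fun j => if Nat.eqb j i then Rpower (w i) gam * exp (lam * u (z i) h) else w j), h).

Fixpoint run_from {Z H : Type} (G : nat -> H -> Z -> H) (z : nat -> Z)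
  (u : Z -> H -> R) (lam gam : R) (t : nat) (st : state H) (s : list nat) : state H :=
  match s with
  | [] => st
  | i :: s' => run_from G z u lam gam (S t) (step G z u lam gam t st i) s'
  end.

Fixpoint qprob_from {Z H : Type} (n : nat) (G : nat -> H -> Z -> H) (z : nat -> Z)
  (u : Z -> H -> R) (lam gam : R) (t : nat) (st : state H) (s : list nat) : R :=
  match s with
  | [] => 1
  | i :: s' => (fst st i / rsum n (fst st)) *
               qprob_from n G z u lam gam (S t) (step G z u lam gam t st i) s'
  end.

Definition init_state {H : Type} (h0 : H) : state H := (fun _ => 1, h0).

Definition Q {Z H : Type} (n : nat) (G : nat -> H -> Z -> H) (z : nat -> Z)
  (u : Z -> H -> R) (lam gam : R) (h0 : H) (s : list nat) : R :=
  qprob_from n G z u lam gam 1 (init_state h0) s.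

Definition hyp {Z H : Type} (G : nat -> H -> Z -> H) (z : nat -> Z)
  (u : Z -> H -> R) (lam gam : R) (h0 : H) (prefix : list nat) : H :=
  snd (run_from G z u lam gam 1 (init_state h0) prefix).

Fixpoint seqs (n T : nat) : list (list nat) :=
  match T with
  | O => [[]]
  | S T' => flat_map (fun i => map (cons i) (seqs n T')) (seq 0 n)
  end.

Definition expect (l : list (list nat)) (p : list nat -> R) (f : list nat -> R) : R :=
  fold_right Rplus 0 (map (fun s => p s * f s) l).

Definition uniform_prior (n T : nat) (s : list nat) : R := / (INR n ^ T).

Definition KL (n T : nat) (q p : list nat -> R) : R :=
  expect (seqs n T) q (fun s => ln (q s / p s)).

(* Give every index the log-weight ln w_j and track the potential
   Phi = sum_j ln w_j, which is 0 initially and stays nonnegative because all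
   weights stay >= 1.  Since the total weight is at least n, drawing i has
   probability at most w_i / n, so each factor of n^T Q(s) is at most w_i.
   The update w_i <- w_i^gamma exp(lambda u) changes Phi by
   (gamma - 1) ln w_i + lambda u, so (1 - gamma) ln w_i is paid for by the
   decrease of Phi and the utility earned; telescoping over t < T and bounding
   the last factor by Phi gives ln (n^T Q(s)) <= lambda / (1 - gamma) times the
   sum of the first T - 1 utilities, pointwise in s.  Averaging under Q gives
   the KL bound. *)

From Pilot Require Import Defs.
From Stdlib Require Import Reals List Lra Lia.
Open Scope R_scope.

Lemma ln_le x y : 0 < x -> x <= y -> ln x <= ln y.
Proof. intros Hx [Hlt | ->]; [left; apply ln_increasing; assumption | lra]. Qed.

Lemma ln_nonneg x : 1 <= x -> 0 <= ln x.
Proof. intros Hx; rewrite <- ln_1; apply ln_le; lra. Qed.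

Lemma one_le_exp x : 0 <= x -> 1 <= exp x.
Proof. intros Hx; pose proof (exp_ineq1_le x); lra. Qed.

Lemma one_le_Rpower x y : 1 <= x -> 0 <= y -> 1 <= Rpower x y.
Proof.
  intros Hx Hy; apply one_le_exp.
  apply Rmult_le_pos; [assumption | apply ln_nonneg; assumption].
Qed.

Lemma one_le_INR n : (0 < n)%nat -> 1 <= INR n.
Proof. intros Hn; apply (le_INR 1); lia. Qed.

Lemma rsum_ext m f g : (forall j, (j < m)%nat -> f j = g j) -> rsum m f = rsum m g.
Proof.
  induction m as [|m IH]; intros Hfg; simpl; [reflexivity|].
  rewrite IH, Hfg; [reflexivity | lia | intros j Hj; apply Hfg; lia].
Qed.

Lemma rsum_update m f i c : (i < m)%nat ->
  rsum m (fun j => if Nat.eqb j i then c else f j) = rsum m f - f i + c.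
Proof.
  induction m as [|m IH]; intros Hi; simpl; [lia|].
  destruct (Nat.eq_dec i m) as [-> | Hne].
  - rewrite Nat.eqb_refl, (rsum_ext m _ f); [lra|].
    intros j Hj; destruct (Nat.eqb_spec j m); [lia | reflexivity].
  - rewrite IH by lia; destruct (Nat.eqb_spec m i); [lia | lra].
Qed.

Lemma rsum_nonneg m f : (forall j, 0 <= f j) -> 0 <= rsum m f.
Proof. intros Hf; induction m; simpl; [lra | pose proof (Hf m); lra]. Qed.

Lemma INR_le_rsum m f : (forall j, 1 <= f j) -> INR m <= rsum m f.
Proof.
  intros Hf; induction m; simpl rsum; [simpl; lra|].
  rewrite S_INR; pose proof (Hf m); lra.
Qed.

Lemma rsum_term_le m f i : (forall j, 0 <= f j) -> (i < m)%nat -> f i <= rsum m f.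
Proof.
  intros Hf; induction m as [|m IH]; intros Hi; simpl; [lia|].
  destruct (Nat.eq_dec i m) as [-> | Hne].
  - pose proof (rsum_nonneg m f Hf); lra.
  - pose proof (IH ltac:(lia)); pose proof (Hf m); lra.
Qed.

(* With all weights >= 1 the total weight is >= n, hence n w_i / W <= w_i. *)
Lemma ln_scaled_draw_prob_le (n : nat) (w : nat -> R) (i : nat) :
  (forall j, 1 <= w j) -> (i < n)%nat ->
  ln (INR n * w i / rsum n w) <= ln (w i).
Proof.
  intros Hw Hi.
  pose proof (INR_le_rsum n w Hw) as HW; pose proof (one_le_INR n ltac:(lia)) as Hn.
  pose proof (Hw i).
  apply ln_le; [apply Rdiv_lt_0_compat; nra|].
  apply (Rmult_le_reg_r (rsum n w)); [lra|].
  unfold Rdiv; rewrite Rmult_assoc, Rinv_l by lra; nra.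
Qed.

Lemma expect_le l p f g : (forall s, In s l -> p s * f s <= p s * g s) ->
  expect l p f <= expect l p g.
Proof.
  unfold expect; induction l as [|a l IH]; intros Hfg; simpl; [lra|].
  pose proof (Hfg a (or_introl eq_refl)).
  pose proof (IH (fun s Hs => Hfg s (or_intror Hs))); lra.
Qed.

Lemma expect_scal l p c f : expect l p (fun s => c * f s) = c * expect l p f.
Proof. unfold expect; induction l as [|a l IH]; simpl; [lra | rewrite IH; ring]. Qed.

Lemma expect_fold_right_plus {A : Type} l p (F : A -> list nat -> R) (L : list A) :
  expect l p (fun s => fold_right Rplus 0 (map (fun t => F t s) L))
  = fold_right Rplus 0 (map (fun t => expect l p (F t)) L).
Proof.
  unfold expect; induction L as [|a L IH]; simpl.
  - induction l as [|b l IHl]; simpl; [lra | rewrite IHl; ring].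
  - rewrite <- IH; clear IH; induction l as [|b l IHl]; simpl; [lra | rewrite IHl; ring].
Qed.

Lemma in_seqs n T s : In s (seqs n T) -> length s = T /\ Forall (fun i => (i < n)%nat) s.
Proof.
  revert s; induction T as [|T IH]; intros s Hs; simpl in Hs.
  - destruct Hs as [<- | []]; split; [reflexivity | constructor].
  - apply in_flat_map in Hs as [i [Hi Hm]]; apply in_map_iff in Hm as [s' [<- Hs']].
    apply in_seq in Hi; destruct (IH s' Hs') as [Hl Hf].
    split; [simpl; congruence | constructor; [lia | exact Hf]].
Qed.

Section Potential.
Variables (Z H : Type) (n : nat) (z : nat -> Z) (G : nat -> H -> Z -> H)
  (u : Z -> H -> R) (lam gam : R).
Hypotheses (hu : forall (x : Z) (h : H), 0 <= u x h)
  (hlam : 0 <= lam) (hgam0 : 0 <= gam) (hgam1 : gam < 1).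

Local Notation step := (Defs.step G z u lam gam).
Local Notation qprob := (qprob_from n G z u lam gam).

Definition weights_ge1 (st : state H) := forall j, 1 <= fst st j.

Definition log_potential (st : state H) := rsum n (fun j => ln (fst st j)).

(* Utilities earned along s, omitting the last iteration: the paper's sum
   over t = 1 .. T - 1. *)
Fixpoint sum_util_but_last (t : nat) (st : state H) (s : list nat) : R :=
  match s with
  | i :: (_ :: _) as s' =>
      u (z i) (snd (step t st i)) + sum_util_but_last (S t) (step t st i) s'
  | _ => 0
  end.

Lemma log_potential_nonneg st : weights_ge1 st -> 0 <= log_potential st.
Proof. intros Hw; apply rsum_nonneg; intros j; apply ln_nonneg, Hw. Qed.

Lemma step_weights_ge1 t st i : weights_ge1 st -> weights_ge1 (step t st i).
Proof.
  intros Hw j; unfold Defs.step; simpl.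
  destruct (Nat.eqb j i); [|apply Hw].
  pose proof (one_le_Rpower (fst st i) gam (Hw i) hgam0).
  assert (1 <= exp (lam * u (z i) (G t (snd st) (z i)))).
  { apply one_le_exp, Rmult_le_pos; [exact hlam | apply hu]. }
  nra.
Qed.

Lemma log_potential_step t st i : weights_ge1 st -> (i < n)%nat ->
  log_potential (step t st i)
  = log_potential st + (gam - 1) * ln (fst st i) + lam * u (z i) (snd (step t st i)).
Proof.
  intros Hw Hi; unfold log_potential, Defs.step; simpl.
  set (h := G t (snd st) (z i)).
  rewrite (rsum_ext n _ (fun j => if Nat.eqb j i
             then ln (Rpower (fst st i) gam * exp (lam * u (z i) h))
             else ln (fst st j))) by (intros j _; destruct (Nat.eqb j i); reflexivity).
  rewrite rsum_update by exact Hi.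
  pose proof (Hw i).
  rewrite ln_mult by (unfold Rpower; apply exp_pos).
  rewrite ln_Rpower, ln_exp; ring.
Qed.

Lemma qprob_pos t st s : weights_ge1 st -> Forall (fun i => (i < n)%nat) s ->
  0 < qprob t st s.
Proof.
  revert t st; induction s as [|i s IH]; intros t st Hw Hs; simpl; [lra|].
  inversion Hs as [|? ? Hi Hs']; subst.
  pose proof (INR_le_rsum n (fst st) Hw); pose proof (one_le_INR n ltac:(lia)).
  pose proof (Hw i).
  apply Rmult_lt_0_compat; [apply Rdiv_lt_0_compat; lra|].
  apply IH; [apply step_weights_ge1 | ]; assumption.
Qed.

Lemma ln_scaled_qprob_cons t st i s : weights_ge1 st -> (i < n)%nat ->
  Forall (fun i => (i < n)%nat) s ->
  ln (INR n ^ length (i :: s) * qprob t st (i :: s))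
  = ln (INR n * fst st i / rsum n (fst st))
    + ln (INR n ^ length s * qprob (S t) (step t st i) s).
Proof.
  intros Hw Hi Hs.
  pose proof (INR_le_rsum n (fst st) Hw); pose proof (one_le_INR n ltac:(lia)).
  pose proof (Hw i).
  pose proof (qprob_pos (S t) (step t st i) s (step_weights_ge1 t st i Hw) Hs).
  pose proof (pow_lt (INR n) (length s) ltac:(lra)).
  rewrite <- ln_mult; [| apply Rdiv_lt_0_compat; nra | nra].
  f_equal; simpl; field; lra.
Qed.

Lemma ln_scaled_qprob_le t st s : weights_ge1 st ->
  Forall (fun i => (i < n)%nat) s ->
  ln (INR n ^ length s * qprob t st s)
  <= (lam * sum_util_but_last t st s + log_potential st) / (1 - gam).
Proof.
  revert t st; induction s as [|i s IH]; intros t st Hw Hs.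
  { simpl; rewrite Rmult_1_l, ln_1.
    pose proof (log_potential_nonneg st Hw).
    apply Rmult_le_pos; [lra | left; apply Rinv_0_lt_compat; lra]. }
  inversion Hs as [|? ? Hi Hs']; subst.
  rewrite ln_scaled_qprob_cons by assumption.
  pose proof (ln_scaled_draw_prob_le n (fst st) i Hw Hi) as Hdraw.
  assert (Hwi : ln (fst st i) <= log_potential st).
  { apply (rsum_term_le n (fun j => ln (fst st j))); [|exact Hi].
    intros j; apply ln_nonneg, Hw. }
  pose proof (ln_nonneg _ (Hw i)).
  destruct s as [|k s'].
  - (* the last draw is paid for by the potential alone *)
    simpl; rewrite Rmult_1_l, ln_1.
    assert (1 <= / (1 - gam)) by (rewrite <- Rinv_1; apply Rinv_le_contravar; lra).
    unfold Rdiv; nra.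
  - pose proof (IH (S t) (step t st i) (step_weights_ge1 t st i Hw) Hs') as IH'.
    rewrite (log_potential_step t st i Hw Hi) in IH'.
    change (sum_util_but_last t st (i :: k :: s'))
      with (u (z i) (snd (step t st i)) + sum_util_but_last (S t) (step t st i) (k :: s')).
    set (a := ln (fst st i)) in *.
    set (b := u (z i) (snd (step t st i))) in *.
    set (B := sum_util_but_last (S t) (step t st i) (k :: s')) in *.
    assert (a + (lam * B + (log_potential st + (gam - 1) * a + lam * b)) / (1 - gam)
            = (lam * (b + B) + log_potential st) / (1 - gam)) by (field; lra).
    lra.
Qed.

Lemma sum_util_but_last_eq t st s :
  sum_util_but_last t st s
  = fold_right Rplus 0 (map (fun k =>
      u (z (nth (k - 1) s 0%nat)) (snd (run_from G z u lam gam t st (firstn k s))))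
      (seq 1 (length s - 1))).
Proof.
  revert t st; induction s as [|i s IH]; intros t st; [reflexivity|].
  destruct s as [|k s']; [reflexivity|].
  change (sum_util_but_last t st (i :: k :: s'))
    with (u (z i) (snd (step t st i)) + sum_util_but_last (S t) (step t st i) (k :: s')).
  rewrite IH; cbn [length].
  replace (S (S (length s')) - 1)%nat with (S (length s')) by lia.
  replace (S (length s') - 1)%nat with (length s') by lia.
  cbn [seq]; rewrite <- (seq_shift (length s') 1); cbn [map fold_right]; rewrite map_map.
  f_equal; f_equal; apply map_ext_in; intros [|m] Hm; [apply in_seq in Hm; lia|].
  simpl; rewrite Nat.sub_0_r; reflexivity.
Qed.

End Potential.

Theorem theorem5 (Z H : Type) (n T : nat) (z : nat -> Z) (h0 : H)
  (G : nat -> H -> Z -> H) (u : Z -> H -> R) (lam gam : R)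
  (hu : forall (x : Z) (h : H), 0 <= u x h)
  (hlam : 0 <= lam) (hgam0 : 0 < gam) (hgam1 : gam < 1) :
  KL n T (Q n G z u lam gam h0) (uniform_prior n T)
  <= lam / (1 - gam) *
     fold_right Rplus 0
       (map (fun t =>
          expect (seqs n T) (Q n G z u lam gam h0)
            (fun s => u (z (nth (t - 1) s 0%nat))
                        (hyp G z u lam gam h0 (firstn t s))))
        (seq 1 (T - 1))).
Proof.
  rewrite <- expect_fold_right_plus, <- expect_scal; unfold KL.
  apply expect_le; intros s Hs; apply in_seqs in Hs as [<- Hs].
  assert (Hinit : weights_ge1 H (init_state h0)) by (intros j; simpl; lra).
  pose proof (Rlt_le _ _ hgam0) as hgam0'.
  pose proof (qprob_pos Z H n z G u lam gam hu hlam hgam0' 1 (init_state h0) s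
                Hinit Hs) as Hq.
  pose proof (ln_scaled_qprob_le Z H n z G u lam gam hu hlam hgam0' hgam1 1 (init_state h0) s
                Hinit Hs) as Hbound.
  assert (Hphi0 : log_potential H n (init_state h0) = 0).
  { unfold log_potential; simpl; rewrite ln_1; clear; induction n; simpl; lra. }
  rewrite Hphi0, sum_util_but_last_eq in Hbound.
  unfold Q, uniform_prior, hyp, Rdiv at 1; rewrite Rinv_inv, (Rmult_comm _ (INR n ^ length s)).
  apply Rmult_le_compat_l; lra.
Qed.
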